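(* Let $I=\langle N,M,V\rangle$ be an ordered instance of goods and let $B\subseteq M$ be a bundle with $v_i(B)\ge\mu_i$ for some agent $i\in N$. If every agent $i'\in N\setminus\{i\}$ has an MMS partition containing a bundle $B_{i'}$ with $B_{i'}\succeq B$, then allocating $B$ to $i$ is a valid reduction.
   Context: An instance $I=\langle N,M,V\rangle$ has agents $N=\{1,\dots,n\}$, goods $M=\{1,\dots,m\}$ and additive valuations $v_i$ with $v_i(\emptyset)=0$, $v_i(S)=\sum_{g\in S}v_i(\{g\})$, $v_{ij}:=v_i(\{j\})\ge 0$. It is ordered if $v_{ij}\ge v_{i(j+1)}$ for all $i$ and $1\le j<m$. An allocation ($n$-partition) is an ordered $n$-tuple of pairwise disjoint, possibly empty subsets of $M$ with union $M$. The maximin share of $i$ in $I$ is $\mu_i=\mu_i^I=\max_A\min_j v_i(A_j)$ over all allocations $A$; an MMS partition of $i$ is an allocation $A$ with $v_i(A_j)\ge\mu_i$ for all $j$. For $B,B'\subseteq M$, $B$ dominates $B'$, written $B\succeq B'$, if there is an injective map $f:B'\to B$ with $f(j)\le j$ for all $j\in B'$. Removing agents $N'\subseteq N$ and items $M'\subseteq M$ is a valid reduction if the items of $M'$ can be allocated to the agents of $N'$ so that each $i'\in N'$ receives a bundle $B_{i'}$ with $v_{i'}(B_{i'})\ge\mu_{i'}^I$, and every $i\in N\setminus N'$ satisfies $\mu_i^{I'}\ge\mu_i^I$, where $I'=\langle N\setminus N', M\setminus M', V\rangle$ (valuations restricted, maximin share computed with $|N\setminus N'|$ bundles). ''Allocating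 $B$ to $i$ is a valid reduction'' means this holds with $N'=\{i\}$, $M'=B$. *)

From mathcomp Require Import all_boot all_order all_algebra.
Set Implicit Arguments. Unset Strict Implicit. Unset Printing Implicit Defensive.
Import Order.TTheory GRing.Theory Num.Theory.
Local Open Scope ring_scope.

(* Agents are 'I_n, goods are 'I_m (good j has index j; the order on goods
   is the order on indices). *)

Section Defs.
Variable R : realFieldType.
Variables n m : nat.

Definition bval (vi : 'I_m -> R) (S : {set 'I_m}) : R := \sum_(g in S) vi g.

Definition nonneg_vals (v : 'I_n -> 'I_m -> R) : Prop :=
  forall i g, 0 <= v i g.

Definition ordered_inst (v : 'I_n -> 'I_m -> R) : Prop :=
  forall i (j k : 'I_m), nat_of_ord k = (nat_of_ord j).+1 -> v i k <= v i j.

Definition is_partition (k : nat) (S : {set 'I_m}) (P : {ffun 'I_k -> {set 'I_m}})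
  : bool :=
  [forall j1, forall j2, (j1 != j2) ==> [disjoint P j1 & P j2]] &&
  (\bigcup_(j < k) P j == S).

(* maximin share of a valuation vi over the goods S with k bundles:
   max over k-partitions P of S of min_j vi(P j).  (The neutral elements
   0 for max and vi(S) for min are harmless for nonnegative valuations
   and k >= 1.) *)
Definition mms (vi : 'I_m -> R) (S : {set 'I_m}) (k : nat) : R :=
  \big[Num.max/0]_(P : {ffun 'I_k -> {set 'I_m}} | is_partition S P)
     \big[Num.min/bval vi S]_(j < k) bval vi (P j).

Definition mms_partition (vi : 'I_m -> R) (A : {ffun 'I_n -> {set 'I_m}}) : Prop :=
  is_partition [set: 'I_m] A /\ forall j, mms vi [set: 'I_m] n <= bval vi (A j).

Definition dominates (B B' : {set 'I_m}) : Prop :=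
  exists f : 'I_m -> 'I_m, {in B' &, injective f} /\
    forall j, j \in B' -> f j \in B /\ (f j <= j)%N.

Definition valid_reduction (v : 'I_n -> 'I_m -> R) (N' : {set 'I_n})
  (M' : {set 'I_m}) : Prop :=
  (exists Bs : 'I_n -> {set 'I_m},
     (forall i1 i2, i1 \in N' -> i2 \in N' -> i1 != i2 -> [disjoint Bs i1 & Bs i2]) /\
     \bigcup_(i in N') Bs i = M' /\
     (forall i, i \in N' -> mms (v i) [set: 'I_m] n <= bval (v i) (Bs i))) /\
  (forall i, i \notin N' ->
     mms (v i) [set: 'I_m] n <= mms (v i) (~: M') (n - #|N'|)).

End Defs.

From mathcomp Require Import all_boot all_order all_algebra.
Import Order.TTheory GRing.Theory Num.Theory.
Set Implicit Arguments. Unset Strict Implicit. Unset Printing Implicit Defensive.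
Local Open Scope ring_scope.

(* Agent i is satisfied by B by assumption, so the point is that every other
   agent i' keeps its maximin share with n - 1 bundles on the goods outside B.
   Take an MMS partition A of i' with A_j dominating B.  Cancelling the goods
   common to A_j and B, the domination yields an injection h from B \ A_j into
   A_j \ B with h g <= g, so v_i'(h g) >= v_i'(g) since the instance is ordered.
   Drop A_j and, in every other bundle A_l, exchange the goods of B for their
   images under h: the n - 1 resulting bundles avoid B, stay pairwise disjoint
   and lose no value, hence witness mu_i' in the reduced instance. *)

Section Dominance.
Variable m : nat.
Implicit Types X Y : {set 'I_m}.

Lemma dominates_setD1 X Y x : x \in X -> x \in Y ->
  dominates X Y -> dominates (X :\ x) (Y :\ x).
Proof.
move=> xX xY [f [f_inj f_dom]].
pose f' y := if f y == x then f x else f y.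
exists f'; split.
  move=> a b /setD1P [ax aY] /setD1P [bx bY]; rewrite /f'.
  case: eqP => fa; case: eqP => fb fab.
  - by apply: f_inj; rewrite ?fa ?fb.
  - by move: bx; rewrite -(f_inj _ _ xY bY fab) eqxx.
  - by move: ax; rewrite (f_inj _ _ aY xY fab) eqxx.
  - exact: f_inj.
move=> y /setD1P [yx yY]; rewrite /f'.
have [fyX fy_le] := f_dom y yY.
case: eqP => [fy|fyx]; last by rewrite !inE fyX andbT; split => //; apply/eqP.
have [fxX fx_le] := f_dom x xY.
split; last by rewrite fy in fy_le; exact: leq_trans fx_le fy_le.
rewrite !inE fxX andbT; apply: contra_neq yx => fxx.
by apply: f_inj; rewrite // fy fxx.
Qed.

Lemma dominates_setD X Y : dominates X Y -> dominates (X :\: Y) (Y :\: X).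
Proof.
have [k] := ubnP #|X :&: Y|; elim: k X Y => // k IH X Y card_XY domXY.
case: (set_0Vmem (X :&: Y)) => [XY0|[x /setIP [xX xY]]].
  have dXY : [disjoint X & Y] by rewrite -setI_eq0 XY0.
  by rewrite (setDidPl dXY) (setDidPl _) // disjoint_sym.
have -> : X :\: Y = (X :\ x) :\: (Y :\ x).
  by apply/setP => g; rewrite !inE; case: (eqVneq g x) => [->|]; rewrite ?xY ?andbF.
have -> : Y :\: X = (Y :\ x) :\: (X :\ x).
  by apply/setP => g; rewrite !inE; case: (eqVneq g x) => [->|]; rewrite ?xX ?andbF.
apply: IH; last exact: dominates_setD1.
rewrite -ltnS (leq_trans _ card_XY) // ltnS; apply/proper_card/properP; split.
  by apply: setISS; apply: subD1set.
by exists x; rewrite !inE ?xX ?xY ?eqxx.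
Qed.

End Dominance.

Section Partitions.
Variable m : nat.

Lemma is_partition_disjoint k (S : {set 'I_m}) (P : {ffun 'I_k -> {set 'I_m}}) :
  is_partition S P -> forall j1 j2, j1 != j2 -> [disjoint P j1 & P j2].
Proof.
by case/andP => /forallP P_disj _ j1 j2; have /forallP /(_ j2) /implyP := P_disj j1.
Qed.

Lemma partition_extend k (S : {set 'I_m}) (C : 'I_k.+1 -> {set 'I_m}) :
  (forall t, C t \subset S) ->
  (forall t t', t != t' -> [disjoint C t & C t']) ->
  exists2 Q : {ffun 'I_k.+1 -> {set 'I_m}}, is_partition S Q & forall t, C t \subset Q t.
Proof.
move=> C_S C_disj; set U := \bigcup_(t | t != ord0) C t.
have U_S : U \subset S by apply/bigcupsP => t _.
have rest_disj t : t != ord0 -> [disjoint S :\: U & C t].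
  move=> t0; rewrite disjoints_subset; apply: subset_trans (subsetDr _ _) _.
  by rewrite setCS; apply: bigcup_sup.
exists [ffun t => if t == ord0 then S :\: U else C t]; last first.
  move=> t; rewrite ffunE; case: eqP => [->|//].
  rewrite subsetD C_S; apply: bigcup_disjoint => t' t0.
  by apply: C_disj; rewrite eq_sym.
apply/andP; split.
  apply/forallP => t1; apply/forallP => t2; apply/implyP => t12; rewrite !ffunE.
  case: eqP => [t1_0|/eqP t1_0]; case: eqP => [t2_0|/eqP t2_0].
  - by rewrite t1_0 t2_0 eqxx in t12.
  - exact: rest_disj.
  - by rewrite disjoint_sym; apply: rest_disj.
  - exact: C_disj.
rewrite (bigD1 ord0) //= ffunE eqxx.
under eq_bigr => t t0 do rewrite ffunE (negbTE t0).
by rewrite setDE setUIl [~: U :|: U]setUC setUCr setIT (setUidPl U_S).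
Qed.

End Partitions.

Lemma ordered_inst_nonincr (R : realFieldType) n m (v : 'I_n -> 'I_m -> R) i :
  ordered_inst v -> forall j k : 'I_m, (j <= k)%N -> v i k <= v i j.
Proof.
move=> v_ord j k jk; pose f a := v i (insubd j a).
have f_val (l : 'I_m) : f l = v i l by rewrite /f valKd.
rewrite -!f_val.
apply: (homo_leq_in (D := [pred a | (a < m)%N]) (r := fun x y => y <= x));
  rewrite ?inE ?ltn_ord //.
- by move=> x y z xy yz; apply: le_trans xy.
- by move=> a b _ bm c /andP [_ cb]; apply: ltn_trans bm.
- by move=> a; rewrite !inE => am a1m; apply: v_ord; rewrite /= !val_insubd am a1m.
Qed.

Section Valuation.
Variables (R : realFieldType) (m : nat) (vi : 'I_m -> R).
Hypothesis vi_ge0 : forall g, 0 <= vi g.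

Lemma bval_subset (X Y : {set 'I_m}) : X \subset Y -> bval vi X <= bval vi Y.
Proof.
move=> XY; rewrite /bval [leRHS](big_setID X) /= (setIidPr XY) lerDl.
exact: sumr_ge0.
Qed.

Lemma bval_setU (X Y : {set 'I_m}) :
  [disjoint X & Y] -> bval vi (X :|: Y) = bval vi X + bval vi Y.
Proof. by move=> dXY; rewrite /bval -bigU //; apply: eq_bigl => g; rewrite !inE. Qed.

Lemma mms_ge_disjoint k (S : {set 'I_m}) (C : 'I_k.+1 -> {set 'I_m}) c :
  (forall t, C t \subset S) ->
  (forall t t', t != t' -> [disjoint C t & C t']) ->
  (forall t, c <= bval vi (C t)) -> c <= mms vi S k.+1.
Proof.
move=> C_S C_disj c_le; have [Q QP C_Q] := partition_extend C_S C_disj.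
apply: le_trans (le_bigmax_cond _ _ QP) => /=.
apply: le_bigmin => [|t _]; first by apply: le_trans (c_le ord0) (bval_subset _).
exact: le_trans (c_le t) (bval_subset _).
Qed.

Hypothesis vi_nonincr : forall j k : 'I_m, (j <= k)%N -> vi k <= vi j.

Lemma bval_imset_ge (X : {set 'I_m}) (f : 'I_m -> 'I_m) :
  {in X &, injective f} -> (forall g, g \in X -> f g <= g)%N ->
  bval vi X <= bval vi (f @: X).
Proof.
by move=> f_inj f_le; rewrite /bval big_imset //; apply: ler_sum => g /f_le /vi_nonincr.
Qed.

Section Exchange.
Variables (k : nat) (A : 'I_k -> {set 'I_m}) (B : {set 'I_m}) (j : 'I_k).
Variable h : 'I_m -> 'I_m.
Hypothesis A_disj : forall l l', l != l' -> [disjoint A l & A l'].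
Hypothesis h_inj : {in B :\: A j &, injective h}.
Hypothesis h_dom : forall g, g \in B :\: A j -> h g \in A j :\: B /\ (h g <= g)%N.

Definition exchange l := (A l :\: B) :|: h @: (B :&: A l).

Lemma setI_subset_setD l : l != j -> B :&: A l \subset B :\: A j.
Proof. by move=> lj; rewrite setDE setIS // -disjoints_subset A_disj. Qed.

Lemma imset_exchange_subset l : l != j -> h @: (B :&: A l) \subset A j :\: B.
Proof.
move=> lj; apply/subsetP => _ /imsetP [g g_in ->].
exact: (h_dom (subsetP (setI_subset_setD lj) g g_in)).1.
Qed.

Lemma exchange_subsetC l : l != j -> exchange l \subset ~: B.
Proof.
move=> lj; rewrite subUset subsetDr /=.
exact: subset_trans (imset_exchange_subset lj) (subsetDr _ _).
Qed.

Lemma exchange_disjoint l l' : l != j -> l' != j -> l != l' ->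
  [disjoint exchange l & exchange l'].
Proof.
move=> lj l'j ll'.
have im_sub_Aj l0 (l0j : l0 != j) :=
  subset_trans (imset_exchange_subset l0j) (subsetDl _ _).
rewrite -setI_eq0 setIUl !setIUr !setU_eq0 !setI_eq0.
rewrite (disjointW (subsetDl _ _) (subsetDl _ _) (A_disj ll')).
rewrite (disjointW (subsetDl _ _) (im_sub_Aj _ l'j) (A_disj lj)).
rewrite (disjointW (im_sub_Aj _ lj) (subsetDl _ _)) 1?disjoint_sym ?A_disj //=.
rewrite -setI_eq0 -imsetI; last first.
  by apply: sub_in11 h_inj; apply/subsetP; exact: setI_subset_setD.
have dA : [disjoint A l' & A l] by rewrite disjoint_sym A_disj.
by rewrite setIACA setIid (disjoint_setI0 dA) setI0 imset0.
Qed.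

Lemma bval_exchange l : l != j -> bval vi (A l) <= bval vi (exchange l).
Proof.
move=> lj; rewrite /exchange bval_setU; last first.
  apply: disjointW (subsetDl _ _) (imset_exchange_subset lj) _.
  exact: disjointWr (subsetDl _ _) (A_disj lj).
rewrite {1}/bval (big_setID B) /= addrC lerD2l setIC.
apply: bval_imset_ge => [|g /(subsetP (setI_subset_setD lj)) /h_dom []//].
apply: sub_in2 h_inj; apply/subsetP; exact: setI_subset_setD.
Qed.

End Exchange.

Lemma mms_setC_ge_dominated k (A : 'I_k.+2 -> {set 'I_m}) B j c :
  (forall l l', l != l' -> [disjoint A l & A l']) ->
  (forall l, c <= bval vi (A l)) -> dominates (A j) B -> c <= mms vi (~: B) k.+1.
Proof.
move=> A_disj c_le /dominates_setD [h [h_inj h_dom]].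
have lift_neq t : lift j t != j by rewrite eq_sym neq_lift.
apply: (@mms_ge_disjoint _ _ (fun t => exchange A B h (lift j t))) => [t|t t' tt'|t].
- exact: exchange_subsetC A_disj h_dom _ (lift_neq t).
- apply: exchange_disjoint A_disj h_inj h_dom _ _ (lift_neq t) (lift_neq t') _.
  by apply: contra_neq tt' => /lift_inj.
- exact: le_trans (c_le _) (bval_exchange A_disj h_inj h_dom (lift_neq t)).
Qed.

End Valuation.

Theorem lemma11 (R : realFieldType) (n m : nat) (v : 'I_n -> 'I_m -> R)
  (Hnonneg : nonneg_vals v) (Hord : ordered_inst v)
  (B : {set 'I_m}) (i : 'I_n)
  (HiB : mms (v i) [set: 'I_m] n <= bval (v i) B)
  (Hdom : forall i' : 'I_n, i' != i ->
     exists A : {ffun 'I_n -> {set 'I_m}},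
       mms_partition (v i') A /\ exists j, dominates (A j) B) :
  valid_reduction v [set i] B.
Proof.
split.
  exists (fun=> B); split; [|split].
  - by move=> i1 i2 /set1P -> /set1P ->; rewrite eqxx.
  - by rewrite big_set1.
  - by move=> i0 /set1P ->.
move=> i'; rewrite in_set1 cards1 => i'i.
have [A [[AP A_mms] [j domB]]] := Hdom i' i'i.
case: n => [|[|k]] in v Hnonneg Hord i HiB Hdom i' i'i A AP A_mms j domB *.
- by have := ltn_ord i'.
- by rewrite (ord1 i) (ord1 i') eqxx in i'i.
rewrite subn1 /=; apply: mms_setC_ge_dominated domB => //.
- exact: ordered_inst_nonincr.
- exact: is_partition_disjoint AP.
Qed.
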